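(* Let $V=\{0,1,2,3,4\}$ (so $n=3$), with nominal durations $\bar\theta_1=\bar\theta_2=\bar\theta_3=1$, maximum deviations $\hat\theta_1=\hat\theta_2=\hat\theta_3=1$, $\bar\theta_0=\hat\theta_0=\bar\theta_4=\hat\theta_4=0$, budget $\Gamma=1$, and let $y\in\{0,1\}^{V\times V}$ be given by $y_{ij}=1$ if and only if $(i,j)\in\{(0,1),(1,2),(1,3),(2,4),(3,4)\}$. For $M>0$ consider the mixed-integer program \[ \max\ \sum_{(i,j)\in V^2}\bigl(\bar\theta_i\alpha_{ij}+\hat\theta_i w_{ij}-M(1-y_{ij})\alpha_{ij}\bigr) \] subject to $\sum_{(j,i)\in V^2}\alpha_{ji}-\sum_{(i,j)\in V^2}\alpha_{ij}=0$ for all $j\in V$ (flow conservation: total flow into $j$ equals total flow out of $j$); $\sum_{i\in V}\alpha_{0i}=1$; $\sum_{i\in V}\alpha_{i4}=1$; $w_{ij}\le\delta_i$ and $w_{ij}\le\alpha_{ij}$ for all $(i,j)\in V^2$; $\sum_{i\in V}\delta_i\le\Gamma$; $0\le\delta_i\le1$ for all $i\in V$; $\alpha_{ij}\in\{0,1\}$ and $w_{ij}\ge0$ for all $(i,j)\in V^2$. Then for all sufficiently large $M$, the optimal value of the linear relaxation of this program (obtained by replacing $\alpha_{ij}\in\{0,1\}$ with $\alpha_{ij}\in[0,1]$) is strictly greater than the optimal value of the mixed-integer program itself; in particular the program is not equivalent to its linear relaxation.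
   Context: This program is the linearised adversarial sub-problem of the two-stage robust resource-constrained project scheduling problem: $V=\{0,\dots,n+1\}$ is the set of activities with dummy source $0$ and dummy sink $n+1$, $y_{ij}=1$ indicates that $(i,j)$ is a precedence arc of the (extended) project network, activity $i$ has duration $\bar\theta_i+\delta_i\hat\theta_i$, and an adversary chooses the delay fractions $\delta$ (with budget $\Gamma$) together with a unit flow $\alpha$ from the source to the sink so as to maximise the total duration along the flow. *)

From mathcomp Require Import all_boot all_order all_algebra.
Set Implicit Arguments. Unset Strict Implicit. Unset Printing Implicit Defensive.
Import Order.TTheory GRing.Theory Num.Theory.
Local Open Scope ring_scope.

(* Activities V = {0,1,2,3,4}: dummy source 0, dummy sink 4 (n = 3). *)
Definition V := 'I_5.
Definition src : V := inord 0.
Definition snk : V := inord 4.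

Section Instance.
Variable R : realFieldType.

Definition thbar (i : V) : R := if (val i == 0%N) || (val i == 4%N) then 0 else 1.
Definition thhat (i : V) : R := if (val i == 0%N) || (val i == 4%N) then 0 else 1.
Definition Gamma : R := 1.

Definition yarc (i j : V) : bool :=
  (val i, val j) \in [:: (0,1); (1,2); (1,3); (2,4); (3,4)]%N.
Definition y (i j : V) : R := if yarc i j then 1 else 0.

Definition objective (M : R) (alpha w : V -> V -> R) : R :=
  \sum_(i : V) \sum_(j : V)
     (thbar i * alpha i j + thhat i * w i j - M * (1 - y i j) * alpha i j).

Definition common_constraints (alpha w : V -> V -> R) (delta : V -> R) : Prop :=
  (forall j : V, \sum_(i : V) alpha i j = \sum_(i : V) alpha j i) /\
  \sum_(i : V) alpha src i = 1 /\
  \sum_(i : V) alpha i snk = 1 /\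
  (forall i j : V, w i j <= delta i /\ w i j <= alpha i j) /\
  \sum_(i : V) delta i <= Gamma /\
  (forall i : V, 0 <= delta i <= 1) /\
  (forall i j : V, 0 <= w i j).

Definition MIP_feasible (alpha w : V -> V -> R) (delta : V -> R) : Prop :=
  common_constraints alpha w delta /\ (forall i j : V, alpha i j = 0 \/ alpha i j = 1).

Definition LP_feasible (alpha w : V -> V -> R) (delta : V -> R) : Prop :=
  common_constraints alpha w delta /\ (forall i j : V, 0 <= alpha i j <= 1).

Definition is_opt_value
    (feas : (V -> V -> R) -> (V -> V -> R) -> (V -> R) -> Prop)
    (f : (V -> V -> R) -> (V -> V -> R) -> R) (v : R) : Prop :=
  (exists alpha w delta, feas alpha w delta /\ f alpha w = v) /\
  (forall alpha w delta, feas alpha w delta -> f alpha w <= v).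

End Instance.

From mathcomp Require Import all_boot all_order all_algebra.
From mathcomp Require Import ring lra.
Set Implicit Arguments. Unset Strict Implicit. Unset Printing Implicit Defensive.
Import Order.TTheory GRing.Theory Num.Theory.
Local Open Scope ring_scope.

(* Write the objective as [gain - M * penalty], the penalty being the total
   flow on non-arcs.  Conservation at the source sends one unit of flow back
   into it, and no arc enters the source, so [penalty >= 1].  Every feasible
   point satisfies [gain <= v + 5 * (penalty - 1)], with [v = 3] for the MIP
   and [v = 7/2] for the relaxation, so for [M >= 5] the optimal values are
   [v - M], attained by circulations closed by the non-arc (4,0).
   For 0/1 flows the linearisation [w_ij <= min(delta_i, alpha_ij)] is exact:
   a path collects at most [Gamma = 1] unit of delay on top of its two unit
   durations.  The relaxation instead splits the flow in halves over 1->2->4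
   and 1->3->4 with delta = (1/2, 1/4, 1/4) on (1, 2, 3), which gives
   [w_12 = w_13 = 1/2] and [w_24 = w_34 = 1/4]: 3/2 units of delay. *)

Definition i0 : V := @Ordinal 5 0 isT.
Definition i1 : V := @Ordinal 5 1 isT.
Definition i2 : V := @Ordinal 5 2 isT.
Definition i3 : V := @Ordinal 5 3 isT.
Definition i4 : V := @Ordinal 5 4 isT.

Lemma src_i0 : src = i0. Proof. by apply: val_inj; rewrite /= inordK. Qed.
Lemma snk_i4 : snk = i4. Proof. by apply: val_inj; rewrite /= inordK. Qed.

Lemma sum_V (R : nmodType) (F : V -> R) :
  \sum_(i : V) F i = F i0 + F i1 + F i2 + F i3 + F i4.
Proof.
rewrite !big_ord_recl big_ord0 addr0 !addrA.
by congr (_ + _ + _ + _ + _); congr F; apply: val_inj.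
Qed.

Lemma forall_V (Q : V -> Prop) :
  Q i0 -> Q i1 -> Q i2 -> Q i3 -> Q i4 -> forall i, Q i.
Proof.
move=> Q0 Q1 Q2 Q3 Q4 [[|[|[|[|[|k]]]]] lt_k5] //.
- by rewrite (_ : Ordinal lt_k5 = i0) //; apply: val_inj.
- by rewrite (_ : Ordinal lt_k5 = i1) //; apply: val_inj.
- by rewrite (_ : Ordinal lt_k5 = i2) //; apply: val_inj.
- by rewrite (_ : Ordinal lt_k5 = i3) //; apply: val_inj.
- by rewrite (_ : Ordinal lt_k5 = i4) //; apply: val_inj.
Qed.

Ltac instantiate_V H :=
  let inst i := let Hi := fresh H in have Hi := H i; try instantiate_V Hi in
  inst i0; inst i1; inst i2; inst i3; inst i4; clear H.

Section Objective.
Variable R : realFieldType.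
Implicit Types (M c v : R) (a w : V -> V -> R).

Definition outflow a (i : V) : R := \sum_(j : V) a i j.

Definition gain a w : R :=
  \sum_(i : V) \sum_(j : V) (thbar R i * a i j + thhat R i * w i j).

Definition penalty a : R := \sum_(i : V) \sum_(j : V) (1 - y R i j) * a i j.

Lemma objectiveE M a w : objective M a w = gain a w - M * penalty a.
Proof.
rewrite /objective /gain /penalty mulr_sumr -sumrB; apply: eq_bigr => i _.
rewrite mulr_sumr -sumrB; apply: eq_bigr => j _; ring.
Qed.

Lemma gainE a w : gain a w =
  outflow a i1 + outflow a i2 + outflow a i3 +
  (outflow w i1 + outflow w i2 + outflow w i3).
Proof. by rewrite /gain /outflow !sum_V /thbar /thhat /=; ring. Qed.

Lemma outflow_le_mul a w (delta : V -> R) i :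
  (forall j, w i j <= delta i * a i j) -> outflow w i <= delta i * outflow a i.
Proof. by move=> le_w; rewrite /outflow mulr_sumr; apply: ler_sum => j _. Qed.

Lemma objective_le M c v a w :
  c <= M -> 1 <= penalty a -> gain a w <= v + c * (penalty a - 1) ->
  objective M a w <= v - M.
Proof.
move=> le_cM pen_ge1 gain_le; rewrite objectiveE.
have : 0 <= (M - c) * (penalty a - 1) by apply: mulr_ge0; lra.
lra.
Qed.

End Objective.

Section Circulation.
Variable R : realFieldType.
Implicit Types (a w : V -> V -> R) (delta : V -> R).

Definition unit_circulation a : Prop :=
  [/\ forall j, \sum_(i : V) a i j = \sum_(i : V) a j i,
      \sum_(i : V) a src i = 1, \sum_(i : V) a i snk = 1
    & forall i j, 0 <= a i j].

Lemma common_constraints_circulation a w delta :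
  common_constraints a w delta -> (forall i j, 0 <= a i j) -> unit_circulation a.
Proof. by case=> conservation [src_out [snk_in _]] a_ge0; split. Qed.

Lemma LP_feasible_circulation a w delta :
  LP_feasible a w delta -> unit_circulation a.
Proof.
case=> feasible alpha01; apply: common_constraints_circulation feasible _ => i j.
by case/andP: (alpha01 i j).
Qed.

Lemma MIP_feasible_circulation a w delta :
  MIP_feasible a w delta -> unit_circulation a.
Proof.
case=> feasible binary; apply: common_constraints_circulation feasible _ => i j.
by case: (binary i j) => ->.
Qed.

End Circulation.

Ltac linearize :=
  repeat match goal with H : context [src] |- _ => rewrite src_i0 in H end;
  repeat match goal with H : context [snk] |- _ => rewrite snk_i4 in H end;
  repeat match goal with H : forall _ : V, _ |- _ => instantiate_V H end;
  repeat match goal with H : context [\sum_(_ : V) _] |- _ => rewrite sum_V /= in H end;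
  rewrite /penalty /outflow /y /yarc ?sum_V /=.

Section CirculationBounds.
Variables (R : realFieldType) (a : V -> V -> R).
Hypothesis circulation : unit_circulation a.

Lemma penalty_ge1 : 1 <= penalty a.
Proof. case: circulation => conservation src_out snk_in a_ge0; linearize; lra. Qed.

Lemma inner_outflow_sum_le :
  outflow a i1 + outflow a i2 + outflow a i3 <= 2 + 2 * (penalty a - 1).
Proof. case: circulation => conservation src_out snk_in a_ge0; linearize; lra. Qed.

Lemma inner_outflow_le :
  [/\ outflow a i1 <= 1 + 2 * (penalty a - 1),
      outflow a i2 <= 1 + 2 * (penalty a - 1)
    & outflow a i3 <= 1 + 2 * (penalty a - 1)].
Proof. case: circulation => conservation src_out snk_in a_ge0; linearize; split; lra. Qed.

End CirculationBounds.

Lemma le_mul_binary (R : numDomainType) (x d w : R) :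
  x = 0 \/ x = 1 -> w <= d -> w <= x -> w <= d * x.
Proof. by move=> [->|->] le_wd le_wx; rewrite ?mulr0 ?mulr1. Qed.

Section GainBounds.
Variable R : realFieldType.
Implicit Types (a w : V -> V -> R) (delta : V -> R).

Lemma LP_inner_delay_le a w delta :
  common_constraints a w delta -> (forall i j, 0 <= a i j) ->
  outflow w i1 + outflow w i2 + outflow w i3 <= 3 / 2 + 5 / 2 * (penalty a - 1).
Proof.
case=> conservation [src_out [snk_in [w_le [+ [delta01 _]]]]] a_ge0.
rewrite /Gamma => delta_sum; linearize.
(* On the two arcs leaving 1, use [w <= (delta_1 + alpha) / 2]. *)
lra.
Qed.

Lemma LP_gain_le a w delta :
  LP_feasible a w delta -> gain a w <= 7 / 2 + 5 * (penalty a - 1).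
Proof.
move=> feasible; have circulation := LP_feasible_circulation feasible.
have := LP_inner_delay_le feasible.1 (fun i j => (andP (feasible.2 i j)).1).
have := inner_outflow_sum_le circulation; have := penalty_ge1 circulation.
rewrite gainE; lra.
Qed.

Lemma MIP_gain_le a w delta :
  MIP_feasible a w delta -> gain a w <= 3 + 5 * (penalty a - 1).
Proof.
move=> feasible; have circulation := MIP_feasible_circulation feasible.
case: feasible => -[_ [_ [_ [w_le [delta_sum [delta01 _]]]]]] binary.
have w_le_mul i : outflow w i <= delta i * outflow a i.
  by apply: outflow_le_mul => j; have [] := w_le i j; apply: le_mul_binary.
have [out1 out2 out3] := inner_outflow_le circulation.
have := inner_outflow_sum_le circulation; have := penalty_ge1 circulation.
move: delta_sum (w_le_mul i1) (w_le_mul i2) (w_le_mul i3).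
move: (delta01 i0) (delta01 i1) (delta01 i2) (delta01 i3) (delta01 i4).
(* [sum_i delta_i * out_i <= (sum_i delta_i) * (1 + 2 p) <= 1 + 2 p], p = penalty - 1 *)
rewrite gainE /Gamma sum_V; nra.
Qed.

End GainBounds.

Section Witnesses.
Variable R : realFieldType.

Definition alpha_LP (i j : V) : R :=
  match val i, val j with
  | 0%N, 1%N | 4%N, 0%N => 1
  | 1%N, 2%N | 1%N, 3%N | 2%N, 4%N | 3%N, 4%N => 1 / 2
  | _, _ => 0
  end.

Definition w_LP (i j : V) : R :=
  match val i, val j with
  | 1%N, 2%N | 1%N, 3%N => 1 / 2
  | 2%N, 4%N | 3%N, 4%N => 1 / 4
  | _, _ => 0
  end.

Definition delta_LP (i : V) : R :=
  match val i with 1%N => 1 / 2 | 2%N | 3%N => 1 / 4 | _ => 0 end.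

Definition alpha_MIP (i j : V) : R :=
  match val i, val j with
  | 0%N, 1%N | 1%N, 2%N | 2%N, 4%N | 4%N, 0%N => 1
  | _, _ => 0
  end.

Definition w_MIP (i j : V) : R := if (val i, val j) == (1, 2)%N then 1 else 0.

Definition delta_MIP (i : V) : R := if val i == 1%N then 1 else 0.

Lemma LP_feasible_witness : LP_feasible alpha_LP w_LP delta_LP.
Proof.
rewrite /LP_feasible /common_constraints src_i0 snk_i4 /Gamma.
repeat first [apply: forall_V | split].
all: by rewrite ?sum_V /alpha_LP /w_LP /delta_LP /=; lra.
Qed.

Lemma MIP_feasible_witness : MIP_feasible alpha_MIP w_MIP delta_MIP.
Proof.
rewrite /MIP_feasible /common_constraints src_i0 snk_i4 /Gamma.
repeat first [apply: forall_V | split].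
all: by rewrite ?sum_V /alpha_MIP /w_MIP /delta_MIP /=; lra.
Qed.

Lemma objective_LP_witness M : objective M alpha_LP w_LP = 7 / 2 - M.
Proof.
by rewrite objectiveE gainE /penalty /outflow /y /yarc !sum_V /alpha_LP /w_LP /=; lra.
Qed.

Lemma objective_MIP_witness M : objective M alpha_MIP w_MIP = 3 - M.
Proof.
by rewrite objectiveE gainE /penalty /outflow /y /yarc !sum_V /alpha_MIP /w_MIP /=; lra.
Qed.

End Witnesses.

Lemma LP_opt_value (R : realFieldType) (M : R) :
  5 <= M -> is_opt_value (@LP_feasible R) (objective M) (7 / 2 - M).
Proof.
move=> le5M; split.
  exists (alpha_LP R), (w_LP R), (delta_LP R).
  by split; [exact: LP_feasible_witness | exact: objective_LP_witness].
move=> a w delta feasible; apply: objective_le le5M _ (LP_gain_le feasible).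
exact/penalty_ge1/LP_feasible_circulation/feasible.
Qed.

Lemma MIP_opt_value (R : realFieldType) (M : R) :
  5 <= M -> is_opt_value (@MIP_feasible R) (objective M) (3 - M).
Proof.
move=> le5M; split.
  exists (alpha_MIP R), (w_MIP R), (delta_MIP R).
  by split; [exact: MIP_feasible_witness | exact: objective_MIP_witness].
move=> a w delta feasible; apply: objective_le le5M _ (MIP_gain_le feasible).
exact/penalty_ge1/MIP_feasible_circulation/feasible.
Qed.

Theorem mainTheorem1 (R : realFieldType) :
  exists M0 : R, forall M : R, 0 < M -> M0 <= M ->
    exists vLP vMIP : R,
      [/\ is_opt_value (@LP_feasible R) (objective M) vLP,
          is_opt_value (@MIP_feasible R) (objective M) vMIP &
          vMIP < vLP].
Proof.
exists 5 => M _ le5M; exists (7 / 2 - M), (3 - M).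
by split; [exact: LP_opt_value | exact: MIP_opt_value | lra].
Qed.
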